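(* If $v$ is a leaf of a tree $T$ with at least four vertices, then fewer than half of the subtrees of $T$ contain $v$.
   Context: A leaf is a vertex of degree at most 1. A subtree of $T$ is a nonempty set of vertices of $T$ inducing a connected subgraph. *)

From mathcomp Require Import all_boot.
Set Implicit Arguments. Unset Strict Implicit. Unset Printing Implicit Defensive.

Definition simple_graph (T : finType) (e : rel T) : Prop :=
  symmetric e /\ irreflexive e.

Definition deg (T : finType) (e : rel T) (v : T) : nat := #|[set w | e v w]|.

Definition leaf (T : finType) (e : rel T) (v : T) : bool := deg e v <= 1.

Definition induced (T : finType) (e : rel T) (S : {set T}) : rel T :=
  fun x y => [&& x \in S, y \in S & e x y].

Definition induces_connected (T : finType) (e : rel T) (S : {set T}) : bool :=
  [forall x in S, forall y in S, connect (induced e S) x y].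

Definition connected_graph (T : finType) (e : rel T) : bool :=
  [forall x, forall y, connect e x y].

Definition has_cycle (T : finType) (e : rel T) : Prop :=
  exists c : seq T, [/\ 3 <= size c, uniq c & cycle e c].

Definition is_tree (T : finType) (e : rel T) : Prop :=
  [/\ simple_graph e, 0 < #|T|, connected_graph e & ~ has_cycle e].

Definition subtree (T : finType) (e : rel T) (S : {set T}) : bool :=
  (S != set0) && induces_connected e S.

Definition subtrees (T : finType) (e : rel T) : {set {set T}} :=
  [set S | subtree e S].

From mathcomp Require Import all_boot.
From mathcomp Require Import zify.

Set Implicit Arguments.
Unset Strict Implicit.
Unset Printing Implicit Defensive.

(* Deleting a leaf v from a subtree S that contains v and something else
   leaves a subtree, and S is recovered from S :\ v; so S |-> S :\ v injects
   the subtrees through v other than [set v] into the subtrees avoiding v.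
   The image misses the singletons {w} with w neither v nor its neighbour
   (S :\ v always contains the neighbour of v), and with four vertices there
   are two such w.  Hence the subtrees through v are outnumbered by the
   others. *)

Lemma subtree_set1 (T : finType) (e : rel T) (w : T) : subtree e [set w].
Proof.
apply/andP; split; first by apply/set0Pn; exists w; rewrite inE.
apply/forall_inP => x /set1P ->; apply/forall_inP => y /set1P ->.
exact: connect0.
Qed.

Section LeafDeletion.

Variables (T : finType) (e : rel T) (v : T).
Hypothesis e_sym : symmetric e.
Hypothesis e_irr : irreflexive e.
Hypothesis v_leaf : leaf e v.

Lemma leaf_neighbor_uniq a b : e v a -> e v b -> a = b.
Proof.
move=> eva evb; apply/eqP; apply: contraT => neq_ab.
have : #|[set a; b]| <= deg e v.
  by apply/subset_leq_card/subsetP => z /set2P [] ->; rewrite inE.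
by rewrite cards2 neq_ab; move: v_leaf; rewrite /leaf; lia.
Qed.

(* A walk in S between vertices other than v can only enter v from its unique
   neighbour x and must leave back to x, so the detour x v x can be cut out. *)
Lemma path_induced_setD1_leaf (S : {set T}) x p :
  x \in S :\ v -> last x p != v -> path (induced e S) x p ->
  connect (induced e (S :\ v)) x (last x p).
Proof.
elim: {p}(size p) {-2}p (leqnn (size p)) x => [|n IH] [|a p] //= size_p x.
move=> xSv last_v /andP [/and3P [_ aS exa] walk].
have [av | nav] := eqVneq a v.
  case: p size_p last_v walk => [|b p] size_p /=; first by rewrite av eqxx.
  rewrite av => last_v /andP [/and3P [_ _ evb] walk].
  have bx : b = x by apply: leaf_neighbor_uniq; rewrite // e_sym -av.
  by rewrite bx in last_v walk *; apply: IH => //; rewrite ltnW.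
have aSv : a \in S :\ v by rewrite !inE nav.
apply: connect_trans (connect1 _) (IH p _ a aSv last_v walk) => //.
by rewrite /induced xSv aSv.
Qed.

Lemma subtree_leaf_neighbor {S : {set T}} :
  subtree e S -> v \in S -> S != [set v] -> exists2 w, w \in S :\ v & e v w.
Proof.
case/andP=> _ /forall_inP S_conn vS S_ne1.
have /set0Pn [x /setD1P [xv xS]] : S :\ v != set0.
  by apply: contraNneq S_ne1 => Sv0; rewrite -(setD1K vS) Sv0 setU0.
have /connectP [[|b p] /= walk x_last] := forall_inP (S_conn v vS) x xS.
  by rewrite x_last eqxx in xv.
case/andP: walk => /and3P [_ bS evb] _; exists b => //.
by rewrite !inE bS andbT; apply: contraTneq evb => ->; rewrite e_irr.
Qed.

Lemma subtree_setD1_leaf (S : {set T}) :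
  subtree e S -> v \in S -> S != [set v] -> subtree e (S :\ v).
Proof.
move=> S_sub vS S_ne1; have [w wSv _] := subtree_leaf_neighbor S_sub vS S_ne1.
case/andP: S_sub => _ /forall_inP S_conn.
apply/andP; split; first by apply/set0Pn; exists w.
apply/forall_inP => x xSv; apply/forall_inP => y ySv.
have [xS yS] := (subsetP (subD1set S v) x xSv, subsetP (subD1set S v) y ySv).
have /connectP [p walk y_last] := forall_inP (S_conn x xS) y yS.
rewrite y_last in ySv *; apply: path_induced_setD1_leaf => //.
by case/setD1P: ySv.
Qed.

Lemma leaf_nonneighbors_card : 4 <= #|T| -> 1 < #|~: (v |: [set w | e v w])|.
Proof.
rewrite cardsCs setCK cardsU1 -cardsT; move: v_leaf; rewrite /leaf /deg.
by case: (v \notin _) => /=; lia.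
Qed.

Lemma card_subtrees_leaf_lt :
  1 < #|~: (v |: [set w | e v w])| ->
  #|[set S in subtrees e | v \in S]| < #|[set S in subtrees e | v \notin S]|.
Proof.
set C := [set S in _ | _]; set N := [set S in _ | _]; set F := ~: _ => F2.
have [w1 w1F] : exists w1, w1 \in F by apply/set0Pn; rewrite -card_gt0; lia.
have [w2 /setD1P [w21 w2F]] : exists w2, w2 \in F :\ w1.
  by apply/set0Pn; rewrite -card_gt0; move: F2; rewrite (cardsD1 w1) w1F; lia.
have far_w w : w \in F -> w != v /\ ~~ e v w.
  by rewrite !inE negb_or => /andP [].
set P := [set [set w1]; [set w2]].
have P_card : #|P| = 2 by rewrite cards2 (inj_eq set1_inj) eq_sym w21.
have PN : P \subset N.
  apply/subsetP => _ /set2P [] ->; rewrite /N !inE subtree_set1 eq_sym.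
    exact: (far_w w1 w1F).1.
  exact: (far_w w2 w2F).1.
have vC : [set v] \in C by rewrite /C !inE subtree_set1 eqxx.
have C_in S : S \in C :\ [set v] -> [/\ S != [set v], subtree e S & v \in S].
  by rewrite !inE => /and3P [].
have D1_inj : {in C :\ [set v] &, injective (fun S => S :\ v)}.
  move=> S1 S2 /C_in [_ _ vS1] /C_in [_ _ vS2] /= S12.
  by rewrite -(setD1K vS1) -(setD1K vS2) S12.
have D1_img : [set S :\ v | S in C :\ [set v]] \subset N :\: P.
  apply/subsetP => _ /imsetP [S /C_in [S_ne1 S_sub vS] ->].
  have [w wSv evw] := subtree_leaf_neighbor S_sub vS S_ne1.
  rewrite /N !inE subtree_setD1_leaf // eqxx andbT /=.
  apply/negP => /orP [] /eqP Sv; move: wSv; rewrite Sv => /set1P wE.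
    by case: (far_w w1 w1F); rewrite -wE evw.
  by case: (far_w w2 w2F); rewrite -wE evw.
have := subset_leq_card D1_img.
rewrite card_in_imset // [#|N :\: P|]cardsD (setIidPr PN) (cardsD1 [set v] C) vC add1n.
(* The occurrences of #|N| differ in hidden coercions, which lia cannot see. *)
have := subset_leq_card PN; rewrite P_card; move: #|N| #|C :\: _| => n m; lia.
Qed.

End LeafDeletion.

Theorem mainTheorem5 (T : finType) (e : rel T) (v : T) :
  is_tree e -> 4 <= #|T| -> leaf e v ->
  2 * #|[set S in subtrees e | v \in S]| < #|subtrees e|.
Proof.
case=> [[e_sym e_irr] _ _ _] T4 v_leaf.
have split_v : #|subtrees e| =
    #|[set S in subtrees e | v \in S]| + #|[set S in subtrees e | v \notin S]|.
  rewrite -(cardsID [set S : {set T} | v \in S]); congr (_ + _).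
    by apply: eq_card => S; rewrite !inE.
  by apply: eq_card => S; rewrite !inE andbC.
have := card_subtrees_leaf_lt e_sym e_irr v_leaf (leaf_nonneighbors_card v_leaf T4).
by rewrite split_v; lia.
Qed.
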